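(* Let $0<\gamma\le\frac{1-\beta}{(1+\beta)^2\Phi_{\max}^2}$, let $z_0=\theta_0-\theta^\star$, and for $t\ge1$ let $C^{t:1}=(I-\gamma a_t)(I-\gamma a_{t-1})\cdots(I-\gamma a_1)$. Then for all $t\ge1$, $$\mathbb E\big[\|C^{t:1}z_0\|_2^2\big]\le(1-\gamma(1-\beta)\mu')^t\,\mathbb E\big[\|z_0\|_2^2\big]\le\exp(-\gamma(1-\beta)\mu't)\,\mathbb E\big[\|z_0\|_2^2\big].$$
   Context: Setting. Let $\mathcal S=\{1,\dots,n\}$ be a finite state space and $\mathcal A$ a finite action space; fix a stationary randomized policy $\pi$, transition probabilities $P(s'|s,a)$, a reward function $r$ with $|r(s,a)|\le R_{\max}$, and a discount factor $\beta\in(0,1)$. Let $P^\pi(s,s')=\sum_a\pi(s,a)P(s'|s,a)$, assumed irreducible with stationary distribution $\rho$, $D=\mathrm{diag}(\rho)$. Features $\phi:\mathcal S\to\mathbb R^d$ with $\|\phi(s)\|_2\le\Phi_{\max}$, $\Phi\in\mathbb R^{n\times d}$ with rows $\phi(s)^\top$ of full column rank, $R(s)=\sum_a\pi(s,a)r(s,a)$, $A=\Phi^\top D(I-\beta P^\pi)\Phi$, $b=\Phi^\top DR$, $\theta^\star=A^{-1}b$, $B=\sum_s\rho(s)\phi(s)\phi(s)^\top$ with minimum eigenvalue $\mu'>0$. Samples $(s_t,a_t,r_t,s'_t)_{t\ge1}$ i.i.d. with $s_t\sim\rho$, $a_t\sim\pi(s_t,\cdot)$, $r_t=r(s_t,a_t)$,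 $s'_t\sim P(\cdot|s_t,a_t)$, independent of the initial parameter $\theta_0$; $a_t=\phi(s_t)\phi(s_t)^\top-\beta\phi(s_t)\phi(s'_t)^\top$. *)

From HB Require Import structures.
From mathcomp Require Import all_boot all_order all_algebra.
From mathcomp Require Import all_classical all_reals all_analysis.
Set Implicit Arguments. Unset Strict Implicit. Unset Printing Implicit Defensive.
Import Order.TTheory GRing.Theory Num.Theory.
Local Open Scope ring_scope.

Section TDdefs.
Variables (R : realType) (n m d : nat).

Definition sample := ('I_n * 'I_m * 'I_n)%type.

Definition Ppi (pi : 'M[R]_(n, m)) (P : 'I_n -> 'I_m -> 'I_n -> R) : 'M[R]_n :=
  \matrix_(s, s') \sum_(a < m) pi s a * P s a s'.

Definition irreducible (M : 'M[R]_n) : Prop :=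
  forall s s' : 'I_n, exists k : nat, 0 < (M ^+ k) s s'.

Definition phi (Phi : 'M[R]_(n, d)) (s : 'I_n) : 'cV[R]_d := (row s Phi)^T.

Definition sqnorm (v : 'cV[R]_d) : R := \sum_(i < d) (v i 0) ^+ 2.

Definition Rvec (pi : 'M[R]_(n, m)) (r : 'I_n -> 'I_m -> R) : 'cV[R]_n :=
  \col_s \sum_(a < m) pi s a * r s a.

Definition Amat (beta : R) (pi : 'M[R]_(n, m)) P (rho : 'rV[R]_n)
  (Phi : 'M[R]_(n, d)) : 'M[R]_d :=
  Phi^T *m diag_mx rho *m (1%:M - beta *: Ppi pi P) *m Phi.

Definition bvec (pi : 'M[R]_(n, m)) r (rho : 'rV[R]_n) (Phi : 'M[R]_(n, d))
  : 'cV[R]_d := Phi^T *m diag_mx rho *m Rvec pi r.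

Definition thetastar beta pi P r rho Phi : 'cV[R]_d :=
  invmx (Amat beta pi P rho Phi) *m bvec pi r rho Phi.

Definition Bmat (rho : 'rV[R]_n) (Phi : 'M[R]_(n, d)) : 'M[R]_d :=
  \sum_(s < n) rho 0 s *: (phi Phi s *m (phi Phi s)^T).

Definition amat (beta : R) (Phi : 'M[R]_(n, d)) (x : sample) : 'M[R]_d :=
  let: (s, _, s') := x in
  phi Phi s *m (phi Phi s)^T - beta *: (phi Phi s *m (phi Phi s')^T).

(* C^{t:1} = (I - g a_t) ... (I - g a_1) for the sample list [:: x_1; ...; x_t] *)
Definition Cprod (beta gamma : R) (Phi : 'M[R]_(n, d)) (xs : seq sample)
  : 'M[R]_d :=
  foldl (fun M x => (1%:M - gamma *: amat beta Phi x) *m M) 1%:M xs.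

(* law of one sample: rho(s) pi(s,a) P(s'|s,a) *)
Definition qsample (pi : 'M[R]_(n, m)) P (rho : 'rV[R]_n) (x : sample) : R :=
  let: (s, a, s') := x in rho 0 s * pi s a * P s a s'.

(* E over the i.i.d. samples x_1..x_t of ||C^{t:1} z||^2, for fixed z *)
Definition ExpSamples (t : nat) beta gamma pi P rho Phi (z : 'cV[R]_d) : R :=
  \sum_(xs : t.-tuple sample)
     (\prod_(x <- xs) qsample pi P rho x) *
     sqnorm (Cprod beta gamma Phi xs *m z).

End TDdefs.

From HB Require Import structures.
From mathcomp Require Import all_boot all_order all_algebra.
From mathcomp Require Import all_classical all_reals all_analysis.
From mathcomp Require Import measurable_realfun.
From mathcomp.algebra_tactics Require Import ring lra.
Set Implicit Arguments. Unset Strict Implicit. Unset Printing Implicit Defensive.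
Import Order.TTheory GRing.Theory Num.Theory numFieldNormedType.Exports.
Local Open Scope ring_scope.

(* For a fixed [z] and [y = Phi z], one TD step gives
   [E |(I - gamma a) z|^2 = |z|^2 - 2 gamma z^T A z + gamma^2 E |a z|^2].
   As [s] and [s'] both have law [rho] (stationarity), [z^T A z >= (1 - beta) z^T B z]
   and [E |a z|^2 <= Phimax^2 (1 + beta)^2 z^T B z], so under the step-size condition
   the expectation is at most [|z|^2 - gamma (1 - beta) z^T B z], which the Rayleigh
   bound [z^T B z >= mu' |z|^2] turns into [(1 - gamma (1 - beta) mu') |z|^2].
   Conditioning on the first sample and inducting on [t] gives the factor
   [(1 - gamma (1 - beta) mu')^t] for every fixed [z0]; integrating over [theta0]
   and [1 - x <= exp (- x)] conclude. *)

Lemma continuous_sum (R : numFieldType) (T : topologicalType) (I : Type)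
    (s : seq I) (f : I -> T -> R) :
  (forall i, continuous (f i)) -> continuous (fun x => \sum_(i <- s) f i x).
Proof.
move=> cf; elim: s => [|i s IH].
  under eq_fun do rewrite big_nil; exact: cst_continuous.
under eq_fun do rewrite big_cons.
by move=> x; apply: continuousD; [exact: cf | exact: IH].
Qed.

(* The pointwise inequality behind one TD step, with [y = phi(s)^T z],
   [y' = phi(s')^T z] and [N = |phi(s)|^2]. *)
Lemma td_step_bound (R : realFieldType) (y y' N K g b : R) :
  0 <= g -> 0 <= b -> 0 <= N <= K ->
  - (2 * g * (y - b * y') * y) + g ^+ 2 * (y - b * y') ^+ 2 * N <=
  g * (b - 2 + g * K * (1 + b)) * y ^+ 2 + g * b * (1 + g * K * (1 + b)) * y' ^+ 2.
Proof.
move=> g0 b0 /andP[N0 NK].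
have cross : 2 * y * y' <= y ^+ 2 + y' ^+ 2 by have := sqr_ge0 (y - y'); lra.
have delta : (y - b * y') ^+ 2 <= (1 + b) * (y ^+ 2 + b * y' ^+ 2).
  by have := mulr_ge0 b0 (sqr_ge0 (y + y')); lra.
have deltaN : (y - b * y') ^+ 2 * N <= (1 + b) * (y ^+ 2 + b * y' ^+ 2) * K.
  apply: le_trans (ler_wpM2l (sqr_ge0 _) NK) _.
  by rewrite ler_wpM2r // (le_trans N0 NK).
have := ler_wpM2l (mulr_ge0 g0 b0) cross; have := ler_wpM2l (sqr_ge0 g) deltaN.
nra.
Qed.

Section QuadraticForm.
Variables (R : realType) (d : nat).
Implicit Types (B : 'M[R]_d) (u v : 'rV[R]_d) (z : 'cV[R]_d).

Definition qform B v : R := (v *m B *m v^T) 0 0.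

Lemma sqnorm_ge0 z : 0 <= sqnorm z.
Proof. by apply: sumr_ge0 => i _; exact: sqr_ge0. Qed.

Lemma sqnorm_eq0 z : (sqnorm z == 0) = (z == 0).
Proof.
apply/idP/eqP => [|->]; last by rewrite /sqnorm big1 // => i _; rewrite mxE expr0n.
rewrite psumr_eq0 => [/allP z0|i _]; last exact: sqr_ge0.
apply/colP => i; rewrite mxE; apply/eqP; rewrite -sqrf_eq0.
exact: (implyP (z0 i (mem_index_enum i))).
Qed.

Lemma sqnormZ (k : R) z : sqnorm (k *: z) = k ^+ 2 * sqnorm z.
Proof. by rewrite /sqnorm mulr_sumr; apply: eq_bigr => i _; rewrite mxE exprMn. Qed.

Lemma sqnormBZ (k : R) (z u : 'cV[R]_d) :
  sqnorm (z - k *: u) = sqnorm z - 2 * k * (u^T *m z) 0 0 + k ^+ 2 * sqnorm u.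
Proof.
rewrite /sqnorm mxE mulr_sumr mulr_sumr -sumrB -big_split /=.
by apply: eq_bigr => i _; rewrite !mxE; ring.
Qed.

Lemma sqnorm_gt0 z : (0 < sqnorm z) = (z != 0).
Proof. by rewrite lt_def sqnorm_ge0 sqnorm_eq0 andbT. Qed.

Lemma qform1 v : qform 1%:M v = sqnorm v^T.
Proof. by rewrite /qform mulmx1 mxE; apply: eq_bigr => i _; rewrite !mxE expr2. Qed.

Lemma qformE B v : qform B v = \sum_j \sum_i v 0 i * B i j * v 0 j.
Proof.
rewrite /qform mxE; apply: eq_bigr => j _; rewrite !mxE big_distrl /=.
by apply: eq_bigr => i _.
Qed.

Lemma qformZ B (k : R) v : qform B (k *: v) = k ^+ 2 * qform B v.
Proof.
by rewrite /qform linearZ /= -scalemxAl -scalemxAl -scalemxAr !mxE mulrA expr2.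
Qed.

Lemma qformB_scalar B (k : R) v :
  qform (B - k%:M) v = qform B v - k * sqnorm v^T.
Proof.
by rewrite -qform1 /qform mulmxBr mulmxBl mul_mx_scalar -scalemxAl mulmx1 !mxE.
Qed.

Lemma qformDZ B u v (e : R) : B^T = B ->
  qform B (u + e *: v) = qform B u + 2 * e * (u *m B *m v^T) 0 0 + e ^+ 2 * qform B v.
Proof.
move=> BT; have sym : (v *m B *m u^T) 0 0 = (u *m B *m v^T) 0 0.
  have tr11 (X : 'M[R]_1) : X^T 0 0 = X 0 0 by rewrite mxE.
  by rewrite -tr11 !trmx_mul trmxK BT mulmxA.
rewrite /qform linearD /= linearZ /= !mulmxDl !mulmxDr -!scalemxAl -!scalemxAr.
by move: sym; rewrite !mxE => ->; ring.
Qed.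

Lemma continuous_qform B : continuous (qform B).
Proof.
have -> : qform B = fun v => \sum_j \sum_i v 0 i * B i j * v 0 j.
  by apply: funext => v; rewrite qformE.
apply: continuous_sum => j; apply: continuous_sum => i v.
apply: (@continuousM _ _ (fun v : 'rV[R]_d => v 0 i * B i j) (fun v => v 0 j));
  last exact: coord_continuous.
apply: (@continuousM _ _ (fun v : 'rV[R]_d => v 0 i) (fun _ => B i j)).
  exact: coord_continuous.
exact: cst_continuous.
Qed.

Lemma qform_unit_min B : (0 < d)%N ->
  exists2 c : 'rV[R]_d, sqnorm c^T = 1 &
    forall u, sqnorm u^T = 1 -> qform B c <= qform B u.
Proof.
move=> d_gt0; pose S := [set v : 'rV[R]_d | sqnorm v^T = 1]%classic.
have S0 : (S !=set0)%classic.
  exists (delta_mx 0 (Ordinal d_gt0)).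
  rewrite /S /= /sqnorm (bigD1 (Ordinal d_gt0)) //= big1 => [|i /negbTE ni].
    by rewrite !mxE eqxx addr0 expr1n.
  by rewrite !mxE ni andbF expr0n.
have Scompact : compact S.
  apply: bounded_closed_compact.
    exists 1; split; first by rewrite real1.
    move=> M M1 v /= Sv; rewrite /Num.norm /= mx_normrE.
    apply: bigmax_le; first lra.
    move=> [i j] _ /=; rewrite (ord1 i).
    have vj : v 0 j ^+ 2 <= sqnorm v^T.
      rewrite /sqnorm (bigD1 j) //= mxE lerDl.
      by apply: sumr_ge0 => k _; exact: sqr_ge0.
    move: vj; rewrite Sv -real_normK ?num_real // => vj.
    have : 0 <= `|v 0 j| by []; nra.
  have -> : S = (qform 1%:M @^-1` [set 1])%classic.
    by apply/funext => v; rewrite /S /= qform1.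
  by apply: preimage_closed => [v _|]; [exact: continuous_qform | exact: closed_eq].
have [c Sc cmin] := compact_EVT_min S0 Scompact
  (continuous_subspaceT (@continuous_qform B)).
exists c => [|u Su]; first by move: Sc; rewrite inE.
by apply: cmin; rewrite inE.
Qed.

Lemma qform_ge_unit_min B c : sqnorm c^T = 1 ->
    (forall u, sqnorm u^T = 1 -> qform B c <= qform B u) ->
  forall u, qform B c * sqnorm u^T <= qform B u.
Proof.
move=> c1 cmin u; have [->|u0] := eqVneq u 0.
  have -> : sqnorm (0 : 'rV[R]_d)^T = 0 by apply/eqP; rewrite sqnorm_eq0 trmx0.
  by rewrite mulr0 /qform !mul0mx mxE.
have su_gt0 : 0 < sqnorm u^T by rewrite sqnorm_gt0 trmx_eq0.
pose k := (Num.sqrt (sqnorm u^T))^-1.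
have k2 : k ^+ 2 = (sqnorm u^T)^-1 by rewrite exprVn sqr_sqrtr // ltW.
have := cmin (k *: u); rewrite linearZ /= sqnormZ qformZ k2 mulVf ?gt_eqF //.
by move=> /(_ erefl) h; rewrite -ler_pdivlMr // mulrC.
Qed.

Lemma psd_qform_eq0 B c : B^T = B -> (forall u, 0 <= qform B u) ->
  qform B c = 0 -> c *m B = 0.
Proof.
move=> BT Bpsd Bc0; set w := c *m B.
have cBw : (c *m B *m w^T) 0 0 = sqnorm w^T by rewrite -qform1 /qform mulmx1.
apply/eqP; rewrite -trmx_eq0 -sqnorm_eq0 eq_le sqnorm_ge0.
rewrite andbT leNgt; apply/negP => A_gt0.
set A := sqnorm w^T in cBw A_gt0; have G0 := Bpsd w; set G := qform B w in G0.
pose e := - (A / (G + 1)).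
have eG : e * (G + 1) = - A by rewrite mulNr divfK // gt_eqF // ltr_pwDr.
have eA : e * A < 0 by rewrite nmulr_rlt0 // oppr_lt0 divr_gt0 // ltr_pwDr.
have := Bpsd (c + e *: w); rewrite qformDZ // Bc0 cBw add0r.
have -> : e ^+ 2 * G = - (e * A) - e ^+ 2 by rewrite -mulrN -eG; ring.
have := sqr_ge0 e; lra.
Qed.

(* A minimiser [c] of [qform B] on the unit sphere exists by compactness; with
   [lam = qform B c], [B - lam] is positive semidefinite with [c] in its kernel,
   so [lam] is an eigenvalue. *)
Lemma qform_ge_eigenvalue_lb B (mu : R) : B^T = B ->
    (forall lam, eigenvalue B lam -> mu <= lam) ->
  forall v, mu * sqnorm v^T <= qform B v.
Proof.
move=> BT mu_lb v; have [d0|d_gt0] := posnP d.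
  by rewrite qformE /sqnorm !big1 ?mulr0 // => i; move: (ltn_ord i); rewrite {2}d0.
have [c c1 cmin] := qform_unit_min B d_gt0; set lam := qform B c in cmin.
have lam_lb := qform_ge_unit_min c1 cmin.
have cB : c *m B = lam *: c.
  apply/eqP; rewrite -subr_eq0 -mul_mx_scalar -mulmxBr; apply/eqP.
  apply: psd_qform_eq0 => [|u|]; rewrite ?qformB_scalar ?subr_ge0 //.
    by rewrite linearB /= BT tr_scalar_mx.
  by rewrite c1 mulr1 subrr.
have c0 : c != 0.
  by rewrite -trmx_eq0 -sqnorm_eq0 c1 oner_eq0.
have /mu_lb mu_le : eigenvalue B lam by apply/eigenvalueP; exists c.
by apply: le_trans (lam_lb v); rewrite ler_wpM2r ?sqnorm_ge0.
Qed.
End QuadraticForm.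

Section TemporalDifference.
Variables (R : realType) (n m d : nat).
Variables (pi : 'M[R]_(n, m)) (P : 'I_n -> 'I_m -> 'I_n -> R) (rho : 'rV[R]_n).
Variables (beta gamma : R) (Phi : 'M[R]_(n, d)).

Local Notation q := (qsample pi P rho).
Local Notation step x := (1%:M - gamma *: amat beta Phi (x : sample n m)).
Local Notation Cprod := (Cprod beta gamma Phi).
Local Notation msq t := (ExpSamples t beta gamma pi P rho Phi).

Lemma Cprod_cons x xs : Cprod (x :: xs) = Cprod xs *m step x.
Proof.
suff foldlE (M : 'M[R]_d) (ys : seq (sample n m)) :
  foldl (fun M x => step x *m M) M ys = Cprod ys *m M.
  by rewrite /Cprod /= foldlE mulmx1.
elim: ys M => [|y ys IH] M /=; first by rewrite mul1mx.
by rewrite /Cprod /= !IH mulmx1 mulmxA.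
Qed.

Lemma ExpSamples0 z : msq 0 z = sqnorm z.
Proof.
rewrite /ExpSamples (big_pred1 [tuple]) => [|xs]; last by apply/esym/eqP; rewrite [LHS]tuple0.
by rewrite big_nil mul1r mul1mx.
Qed.

Lemma ExpSamplesS t z :
  msq t.+1 z = \sum_x q x * msq t (step x *m z).
Proof.
pose cons_pair (p : sample n m * t.-tuple (sample n m)) := cons_tuple p.1 p.2.
rewrite /ExpSamples (reindex cons_pair) /=; last first.
  exists (fun xs => (thead xs, behead_tuple xs)) => [[x xs] _|xs _] /=.
    by congr (_, _); exact: val_inj.
  by rewrite [RHS]tuple_eta.
rewrite -(pair_bigA _ (fun x (xs : t.-tuple _) =>
  \prod_(y <- x :: xs) q y * sqnorm (Cprod (x :: xs) *m z))).
apply: eq_bigr => x _; rewrite mulr_sumr.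
by apply: eq_bigr => xs _; rewrite big_cons Cprod_cons mulmxA mulrA.
Qed.

Lemma sum_sample (F : sample n m -> R) :
  \sum_x F x = \sum_(s < n) \sum_(a < m) \sum_(s' < n) F (s, a, s').
Proof. by rewrite pair_bigA pair_bigA; apply: eq_bigr => -[[]]. Qed.

Lemma phiT_mulmx s z : (phi Phi s)^T *m z = ((Phi *m z) s 0)%:M.
Proof. by rewrite trmxK -row_mul [LHS]mx11_scalar mxE. Qed.

Lemma amat_mulmx s a s' z :
  amat beta Phi ((s, a, s') : sample n m) *m z =
  ((Phi *m z) s 0 - beta * (Phi *m z) s' 0) *: phi Phi s.
Proof.
by rewrite mulmxBl -scalemxAl -!mulmxA !phiT_mulmx !mul_mx_scalar scalerBl scalerA.
Qed.

Lemma sqnorm_step s a s' z :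
  let y := Phi *m z in let e := y s 0 - beta * y s' 0 in
  sqnorm (step (s, a, s') *m z) =
  sqnorm z - 2 * gamma * e * y s 0 + gamma ^+ 2 * e ^+ 2 * sqnorm (phi Phi s).
Proof.
move=> y e; rewrite mulmxBl mul1mx -scalemxAl amat_mulmx scalerA sqnormBZ.
have -> : ((phi Phi s)^T *m z) 0 0 = y s 0 by rewrite phiT_mulmx mxE mulr1n.
by rewrite exprMn -/y -/e; ring.
Qed.

Lemma qform_Bmat z : qform (Bmat rho Phi) z^T = \sum_s rho 0 s * (Phi *m z) s 0 ^+ 2.
Proof.
rewrite /qform trmxK /Bmat mulmx_sumr mulmx_suml summxE; apply: eq_bigr => s _.
rewrite -scalemxAr -scalemxAl mxE.
have -> : z^T *m (phi Phi s *m (phi Phi s)^T) *m z =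
    ((phi Phi s)^T *m z)^T *m ((phi Phi s)^T *m z).
  by rewrite trmx_mul trmxK !mulmxA.
by rewrite phiT_mulmx tr_scalar_mx mul_mx_scalar !mxE eqxx mulr1n expr2.
Qed.

Lemma Bmat_sym : (Bmat rho Phi)^T = Bmat rho Phi.
Proof.
rewrite /Bmat linear_sum; apply: eq_bigr => s _.
by rewrite linearZ /= trmx_mul trmxK.
Qed.

Hypothesis pi_ge0 : forall s a, 0 <= pi s a.
Hypothesis pi_sum1 : forall s, \sum_(a < m) pi s a = 1.
Hypothesis P_ge0 : forall s a s', 0 <= P s a s'.
Hypothesis P_sum1 : forall s a, \sum_(s' < n) P s a s' = 1.
Hypothesis rho_ge0 : forall s, 0 <= rho 0 s.
Hypothesis rho_sum1 : \sum_(s < n) rho 0 s = 1.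
Hypothesis rho_stationary : rho *m Ppi pi P = rho.

Lemma qsample_ge0 x : 0 <= q x.
Proof. by case: x => [[s a] s'] /=; rewrite !mulr_ge0. Qed.

Lemma ExpSamples_ge0 t z : 0 <= msq t z.
Proof.
apply: sumr_ge0 => xs _; rewrite mulr_ge0 ?sqnorm_ge0 //.
by apply: prodr_ge0 => x _; exact: qsample_ge0.
Qed.

Lemma sum_qsample_fst (f : 'I_n -> R) :
  \sum_x q x * f x.1.1 = \sum_s rho 0 s * f s.
Proof.
rewrite sum_sample; apply: eq_bigr => s _.
rewrite -[RHS]mulr1 -(pi_sum1 s) !mulr_sumr; apply: eq_bigr => a _.
rewrite -[RHS]mulr1 -(P_sum1 s a) !mulr_sumr; apply: eq_bigr => s' _ /=; ring.
Qed.

Lemma sum_qsample_snd (f : 'I_n -> R) :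
  \sum_x q x * f x.2 = \sum_s rho 0 s * f s.
Proof.
rewrite sum_sample; under eq_bigr do rewrite exchange_big /=.
rewrite exchange_big /=; apply: eq_bigr => s' _.
rewrite -[in RHS]rho_stationary mxE mulr_suml; apply: eq_bigr => s _.
by rewrite mxE mulr_sumr mulr_suml; apply: eq_bigr => a _; ring.
Qed.

Lemma sum_qsample : \sum_x q x = 1.
Proof.
rewrite -rho_sum1; have := sum_qsample_fst (fun _ => 1).
by under eq_bigr do rewrite mulr1; under [RHS]eq_bigr do rewrite mulr1.
Qed.

Lemma expected_step_sqnorm (K : R) z :
  0 < gamma -> 0 <= beta -> (forall s, sqnorm (phi Phi s) <= K) ->
  gamma * K * (1 + beta) ^+ 2 <= 1 - beta ->
  \sum_x q x * sqnorm (step x *m z) <=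
    sqnorm z - gamma * (1 - beta) * qform (Bmat rho Phi) z^T.
Proof.
move=> g_gt0 b_ge0 phiK gK; set y := Phi *m z.
set c1 := gamma * (beta - 2 + gamma * K * (1 + beta)).
set c2 := gamma * beta * (1 + gamma * K * (1 + beta)).
have pointwise x : q x * sqnorm (step x *m z) <=
    q x * sqnorm z + c1 * (q x * y x.1.1 0 ^+ 2) + c2 * (q x * y x.2 0 ^+ 2).
  rewrite mulrCA [c2 * _]mulrCA -!mulrDr; apply: ler_wpM2l; first exact: qsample_ge0.
  case: x => [[s a] s']; rewrite sqnorm_step /= -/y -!addrA lerD2l.
  by apply: td_step_bound; rewrite ?sqnorm_ge0 ?phiK // ltW.
apply: le_trans (ler_sum _ (fun x _ => pointwise x)) _.
rewrite !big_split /= -mulr_suml sum_qsample mul1r -!mulr_sumr.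
rewrite (sum_qsample_fst (fun s => y s 0 ^+ 2)) (sum_qsample_snd (fun s => y s 0 ^+ 2)).
rewrite -qform_Bmat -addrA lerD2l -mulrDl.
have Q_ge0 : 0 <= qform (Bmat rho Phi) z^T.
  by rewrite qform_Bmat sumr_ge0 // => s _; rewrite mulr_ge0 ?sqr_ge0.
have := ler_wpM2l (ltW g_gt0) gK; rewrite /c1 /c2; nra.
Qed.

Lemma expected_step_contraction (K mu : R) :
    0 < gamma -> 0 <= beta <= 1 -> (forall s, sqnorm (phi Phi s) <= K) ->
    gamma * K * (1 + beta) ^+ 2 <= 1 - beta ->
    (forall lam, eigenvalue (Bmat rho Phi) lam -> mu <= lam) ->
  forall z, \sum_x q x * sqnorm (step x *m z) <= (1 - gamma * (1 - beta) * mu) * sqnorm z.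
Proof.
move=> g_gt0 /andP[b_ge0 b_le1] phiK gK mu_lb z.
apply: le_trans (expected_step_sqnorm z g_gt0 b_ge0 phiK gK) _.
have := qform_ge_eigenvalue_lb Bmat_sym mu_lb z^T; rewrite trmxK.
have : 0 <= gamma * (1 - beta) by rewrite mulr_ge0 ?subr_ge0 // ltW.
nra.
Qed.

Lemma contraction_factor_ge0 (c : R) (v : 'cV[R]_d) : v != 0 ->
    (forall z, \sum_x q x * sqnorm (step x *m z) <= c * sqnorm z) ->
  0 <= c.
Proof.
move=> v_neq0 contraction.
rewrite -(pmulr_lge0 _ (_ : 0 < sqnorm v)) ?sqnorm_gt0 //.
apply: le_trans (contraction v); apply: sumr_ge0 => x _.
by rewrite mulr_ge0 ?qsample_ge0 ?sqnorm_ge0.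
Qed.

Lemma ExpSamples_le_expr (c : R) t z : 0 <= c ->
    (forall z, \sum_x q x * sqnorm (step x *m z) <= c * sqnorm z) ->
  msq t z <= c ^+ t * sqnorm z.
Proof.
move=> c_ge0 contraction; elim: t z => [|t IH] z.
  by rewrite ExpSamples0 expr0 mul1r.
rewrite ExpSamplesS exprSr -mulrA.
apply: le_trans (ler_wpM2l (exprn_ge0 t c_ge0) (contraction z)).
rewrite mulr_sumr; apply: ler_sum => x _; rewrite mulrCA.
by apply: ler_wpM2l; [exact: qsample_ge0 | exact: IH].
Qed.

End TemporalDifference.

(* The junk value [x / 0 = 0] would turn a null denominator into [gamma <= 0]. *)
Lemma step_size_bound (R : realFieldType) (gamma beta Phimax : R) :
    0 < gamma -> gamma <= (1 - beta) / ((1 + beta) ^+ 2 * Phimax ^+ 2) ->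
  gamma * Phimax ^+ 2 * (1 + beta) ^+ 2 <= 1 - beta.
Proof.
move=> g_gt0 g_le.
have [den0|den_neq0] := eqVneq ((1 + beta) ^+ 2 * Phimax ^+ 2) 0.
  by move: g_le; rewrite den0 invr0 mulr0 => /(lt_le_trans g_gt0); rewrite ltxx.
have den_gt0 : 0 < (1 + beta) ^+ 2 * Phimax ^+ 2.
  by rewrite lt_def den_neq0 mulr_ge0 ?sqr_ge0.
by move: g_le; rewrite ler_pdivlMr // [_ ^+ 2 * _]mulrC mulrA.
Qed.

Lemma exprn_le_expR (R : realType) (x : R) t :
  0 <= 1 - x -> (1 - x) ^+ t <= expR (- (x * t%:R)).
Proof.
move=> x_le1; rewrite -mulNr expRM_natr lerXn2r ?nnegrE ?expR_ge0 //.
exact: expR_ge1Dx.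
Qed.

Section Integration.
Variables (R : realType) (dO : measure_display) (Omega : measurableType dO).

Lemma ge0_le_integral_scale (mu : measure Omega R) (f g : Omega -> R) (c : R) :
    0 <= c -> measurable_fun setT f -> measurable_fun setT g ->
    (forall w, 0 <= f w) -> (forall w, 0 <= g w) -> (forall w, f w <= c * g w) ->
  (\int[mu]_w (f w)%:E <= c%:E * \int[mu]_w (g w)%:E)%E.
Proof.
move=> c_ge0 f_meas g_meas f_ge0 g_ge0 f_le.
rewrite -ge0_integralZl_EFin //; last first.
- exact/measurable_EFinP.
- by move=> w _; rewrite lee_fin.
apply: ge0_le_integral => //.
- by move=> w _; rewrite lee_fin.
- exact/measurable_EFinP.
- by under eq_fun do rewrite -EFinM; exact/measurable_EFinP/measurable_funM.
- by move=> w _; rewrite -EFinM lee_fin.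
Qed.

Variable d : nat.

Lemma measurable_sqnorm_mulmx (M : 'M[R]_d) (z : Omega -> 'cV[R]_d) :
    (forall i, measurable_fun setT (fun w => z w i 0)) ->
  measurable_fun setT (fun w => sqnorm (M *m z w)).
Proof.
move=> z_meas; apply: measurable_sum => i; apply: measurable_funX.
under eq_fun do rewrite mxE.
by apply: measurable_sum => j; exact: measurable_funM.
Qed.

Lemma measurable_ExpSamples n m t beta gamma pi P rho (Phi : 'M[R]_(n, d))
    (z : Omega -> 'cV[R]_d) :
    (forall i, measurable_fun setT (fun w => z w i 0)) ->
  measurable_fun setT (fun w => @ExpSamples R n m d t beta gamma pi P rho Phi (z w)).
Proof.
move=> z_meas; apply: measurable_sum => xs.
by apply: measurable_funM; [exact: measurable_cst | exact: measurable_sqnorm_mulmx].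
Qed.

End Integration.

Theorem mainTheorem11
  (R : realType) (n m d : nat)
  (pi : 'M[R]_(n, m)) (P : 'I_n -> 'I_m -> 'I_n -> R)
  (r : 'I_n -> 'I_m -> R) (Rmax beta : R)
  (rho : 'rV[R]_n) (Phi : 'M[R]_(n, d)) (Phimax mu' gamma : R)
  (dO : measure_display) (Omega : measurableType dO)
  (Pr : probability Omega R) (theta0 : Omega -> 'cV[R]_d) :
  (forall s a, 0 <= pi s a) ->
  (forall s, \sum_(a < m) pi s a = 1) ->
  (forall s a s', 0 <= P s a s') ->
  (forall s a, \sum_(s' < n) P s a s' = 1) ->
  (forall s a, `|r s a| <= Rmax) ->
  0 < beta < 1 ->
  irreducible (Ppi pi P) ->
  (forall s, 0 <= rho 0 s) -> \sum_(s < n) rho 0 s = 1 ->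
  rho *m Ppi pi P = rho ->
  (forall s, Num.sqrt (sqnorm (phi Phi s)) <= Phimax) ->
  \rank Phi = d ->
  eigenvalue (Bmat rho Phi) mu' ->
  (forall lam : R, eigenvalue (Bmat rho Phi) lam -> mu' <= lam) ->
  0 < mu' ->
  (forall i, measurable_fun setT (fun w => theta0 w i 0)) ->
  0 < gamma <= (1 - beta) / ((1 + beta) ^+ 2 * Phimax ^+ 2) ->
  forall t : nat, (1 <= t)%N ->
  let z0 := fun w => theta0 w - thetastar beta pi P r rho Phi in
  let EC := (\int[Pr]_w (ExpSamples t beta gamma pi P rho Phi (z0 w))%:E)%E in
  let Ez0 := (\int[Pr]_w (sqnorm (z0 w))%:E)%E in
  (EC <= ((1 - gamma * (1 - beta) * mu') ^+ t)%:E * Ez0)%E /\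
  (((1 - gamma * (1 - beta) * mu') ^+ t)%:E * Ez0
     <= (expR (- (gamma * (1 - beta) * mu' * t%:R)))%:E * Ez0)%E.
Proof.
move=> pi_ge0 pi_sum1 P_ge0 P_sum1 _ /andP[b_gt0 b_lt1] _ rho_ge0 rho_sum1
  rho_stat phi_le _ mu_eig mu_lb _ theta0_meas /andP[g_gt0 g_le] t _ z0 EC Ez0.
have phiK s : sqnorm (phi Phi s) <= Phimax ^+ 2.
  rewrite -(sqr_sqrtr (sqnorm_ge0 _)) ler_sqr ?nnegrE ?sqrtr_ge0 //.
  exact: le_trans (sqrtr_ge0 _) (phi_le s).
have b_range : 0 <= beta <= 1 by rewrite !ltW.
have contraction := expected_step_contraction pi_ge0 pi_sum1 P_ge0 P_sum1 rho_ge0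
  rho_sum1 rho_stat g_gt0 b_range phiK (step_size_bound g_gt0 g_le) mu_lb.
have c_ge0 : 0 <= 1 - gamma * (1 - beta) * mu'.
  have [v _ v_neq0] := eigenvalueP mu_eig.
  have vT_neq0 : v^T != 0 by rewrite trmx_eq0.
  exact (contraction_factor_ge0 pi_ge0 P_ge0 rho_ge0 vT_neq0 contraction).
have z0_meas i : measurable_fun setT (fun w => z0 w i 0).
  by under eq_fun do rewrite !mxE; exact/measurable_funB.
split.
  apply: ge0_le_integral_scale; rewrite ?exprn_ge0 //.
  - exact: measurable_ExpSamples.
  - by under eq_fun do rewrite -[z0 _]mul1mx; exact: measurable_sqnorm_mulmx.
  - by move=> w; exact: ExpSamples_ge0.
  - by move=> w; exact: sqnorm_ge0.
  - by move=> w; exact: ExpSamples_le_expr.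
apply: lee_wpmul2r; first by apply: integral_ge0 => w _; rewrite lee_fin sqnorm_ge0.
by rewrite lee_fin exprn_le_expR.
Qed.
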